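(* Let $\mathfrak g$ be a finite-dimensional complex simple Lie algebra with root system $\Phi$, base $\Pi=\{\alpha_1,\dots,\alpha_n\}$ and Weyl group $W$, and let $\lambda$ be a dominant integral weight. Let $\mathbf P$ be the weight polytope of $\lambda$. Then the set of orbits of the nonempty faces of $\mathbf P$ under the action of $W$ is in bijection with the set of connected subdiagrams of the extended Dynkin diagram that contain the extended node $\{-\lambda\}$.
   Context: Let $E$ be the real span of $\Pi$, equipped with the $W$-invariant inner product $(\cdot,\cdot)$; weights are regarded as elements of $E$. The weight polytope of $\lambda$ is $\mathbf P=\mathrm{conv}(W\lambda)$, the convex hull of the $W$-orbit of $\lambda$ (equivalently, the convex hull of the set of weights of the irreducible highest weight module of highest weight $\lambda$). $W$ acts on the set of faces of $\mathbf P$. The extended Dynkin diagram is the graph obtained from the Dynkin diagram of $\Pi$ (vertices $\alpha_1,\dots,\alpha_n$ with the usual edges) by adding a new node $\{-\lambda\}$ and drawing a single edge between $\{-\lambda\}$ and $\alpha_i$ if and only if $(\lambda,\alpha_i)>0$. A subdiagram means the induced subdiagram on a subset of the vertices. *)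

From HB Require Import structures.
From mathcomp Require Import all_boot all_order all_algebra.
From mathcomp Require Import reals.
Set Implicit Arguments. Unset Strict Implicit. Unset Printing Implicit Defensive.
Import Order.TTheory GRing.Theory Num.Theory.
Local Open Scope ring_scope.

Section RootSystems.
Variables (R : realType) (n : nat).
Notation vec := 'rV[R]_n.

Definition dot (u v : vec) : R := (u *m v^T) 0 0.

Definition refl (a v : vec) : vec := v - ((2 * dot v a) / dot a a) *: a.

(* Phi is a reduced, irreducible (crystallographic) root system in E
   (spanning of E is guaranteed by the base hypothesis below). *)
Definition is_irred_reduced_root_system (Phi : seq vec) : Prop :=
  [/\ 0 \notin Phi,
      (forall a b, a \in Phi -> b \in Phi -> refl a b \in Phi),
      (forall a b, a \in Phi -> b \in Phi ->
         exists z : int, (2 * dot b a) / dot a a = z%:~R),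
      (forall a (c : R), a \in Phi -> c *: a \in Phi -> c = 1 \/ c = -1) &
      (forall P : pred vec,
         (forall a b, a \in Phi -> b \in Phi -> P a -> ~~ P b -> dot a b = 0) ->
         all P Phi \/ all (predC P) Phi)].

Definition is_base (Phi : seq vec) (alpha : 'I_n -> vec) : Prop :=
  [/\ (forall i, alpha i \in Phi),
      row_free (\matrix_(i < n) alpha i) &
      (forall b, b \in Phi -> exists c : 'I_n -> int,
          b = \sum_(i < n) (c i)%:~R *: alpha i /\
          ((forall i, (0 <= c i)%R) \/ (forall i, (c i <= 0)%R)))].

Inductive weyl (Phi : seq vec) : (vec -> vec) -> Prop :=
  | weyl_id : weyl Phi id
  | weyl_step a w : a \in Phi -> weyl Phi w -> weyl Phi (refl a \o w).

Definition dominant_integral (alpha : 'I_n -> vec) (lam : vec) : Prop :=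
  forall i, exists m : nat, (2 * dot lam (alpha i)) / dot (alpha i) (alpha i) = m%:R.

Definition conv (S : vec -> Prop) (x : vec) : Prop :=
  exists (k : nat) (p : 'I_k -> vec) (t : 'I_k -> R),
    [/\ (forall i, S (p i)), (forall i, 0 <= t i), \sum_(i < k) t i = 1 &
        x = \sum_(i < k) t i *: p i].

Definition weight_polytope (Phi : seq vec) (lam : vec) : vec -> Prop :=
  conv (fun x => exists w, weyl Phi w /\ x = w lam).

(* F is a nonempty face of P: F = P cut out by a supporting hyperplane
   (c = 0 gives P itself). *)
Definition nonempty_face (P F : vec -> Prop) : Prop :=
  (exists x, F x) /\
  exists c : vec, forall x, F x <-> (P x /\ forall y, P y -> dot c y <= dot c x).

Definition same_W_orbit (Phi : seq vec) (F G : vec -> Prop) : Prop :=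
  exists w, weyl Phi w /\ forall x, G x <-> exists y, F y /\ x = w y.

(* Extended Dynkin diagram on vertices option 'I_n (None = {-lambda}). *)
Definition ext_adj (alpha : 'I_n -> vec) (lam : vec) (x y : option 'I_n) : bool :=
  match x, y with
  | Some i, Some j => (i != j) && (dot (alpha i) (alpha j) != 0)
  | None, Some i | Some i, None => 0 < dot lam (alpha i)
  | None, None => false
  end.

Definition connected_sub (adj : rel (option 'I_n)) (S : {set option 'I_n}) : Prop :=
  forall x y, x \in S -> y \in S ->
    connect (fun u v => [&& u \in S, v \in S & adj u v]) x y.

End RootSystems.

From HB Require Import structures.
From mathcomp Require Import all_boot all_order all_algebra.
From mathcomp Require Import reals boolp.
From mathcomp Require Import ring lra zify.
Set Implicit Arguments. Unset Strict Implicit. Unset Printing Implicit Defensive.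
Import Order.TTheory GRing.Theory Num.Theory.
Local Open Scope ring_scope.

(* Every face of [P] is a [W]-translate of a face [F_c] with [c] dominant, and [F_c] is
   the convex hull of the orbit points [lam - \sum_(i in J) k_i alpha_i], where [J] is the
   set of nodes orthogonal to [c]. The nodes [i] with some [k_i <> 0] are exactly the
   components of [J] containing a node not orthogonal to [lam]: on a component orthogonal
   to [lam] and to the rest of these nodes, reflections act on the corresponding part of
   [lam - v], and a nonzero such part could always be made lower. Together with [-lam]
   these nodes form a connected subdiagram, which determines [F_c]. It is attached to an
   arbitrary face through the dominant representative of the sum of the orbit points on
   the face, which is constant on [W]-orbits of faces. Conversely, the connected
   subdiagram through [-lam] on the nodes [X] comes from the face of a dominant [c] that
   is orthogonal exactly to the [alpha i], [i] in [X]. *)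

Section Euclid.
Variables (R : realType) (n : nat).
Notation vec := 'rV[R]_n.
Implicit Types (u v w a : vec) (S : vec -> Prop).

Lemma dotDl u v w : dot (u + v) w = dot u w + dot v w.
Proof. by rewrite /dot mulmxDl mxE. Qed.

Lemma dotZl k u v : dot (k *: u) v = k * dot u v.
Proof. by rewrite /dot -scalemxAl mxE. Qed.

Lemma dotC u v : dot u v = dot v u.
Proof.
rewrite /dot; have -> : v *m u^T = (u *m v^T)^T by rewrite trmx_mul trmxK.
by rewrite [in RHS]mxE.
Qed.


Lemma dotZr k u v : dot u (k *: v) = k * dot u v.
Proof. by rewrite dotC dotZl dotC. Qed.

Lemma dot0r u : dot u 0 = 0.
Proof. by rewrite -(scale0r (0 : vec)) dotZr mul0r. Qed.

Lemma dotNl u v : dot (- u) v = - dot u v.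
Proof. by rewrite -scaleN1r dotZl mulN1r. Qed.

Lemma dotBl u v w : dot (u - v) w = dot u w - dot v w.
Proof. by rewrite dotDl dotNl. Qed.

Lemma dotBr u v w : dot u (v - w) = dot u v - dot u w.
Proof. by rewrite !(dotC u) dotBl. Qed.

Lemma dot_suml (I : Type) (r : seq I) (P : pred I) (F : I -> vec) v :
  dot (\sum_(i <- r | P i) F i) v = \sum_(i <- r | P i) dot (F i) v.
Proof.
elim/big_rec2: _ => [|i x y _ <-]; last by rewrite dotDl.
by rewrite dotC dot0r.
Qed.

Lemma dot_sumr (I : Type) (r : seq I) (P : pred I) (F : I -> vec) v :
  dot v (\sum_(i <- r | P i) F i) = \sum_(i <- r | P i) dot v (F i).
Proof. by rewrite dotC dot_suml; apply: eq_bigr => i _; rewrite dotC. Qed.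

Lemma dotE u v : dot u v = \sum_j u 0 j * v 0 j.
Proof. by rewrite /dot mxE; apply: eq_bigr => j _; rewrite mxE. Qed.

Lemma dot_ge0 u : 0 <= dot u u.
Proof. by rewrite dotE sumr_ge0 // => j _; rewrite -expr2 sqr_ge0. Qed.

Lemma dot_eq0 u : (dot u u == 0) = (u == 0).
Proof.
apply/idP/idP => [|/eqP->]; last by rewrite dot0r.
rewrite dotE psumr_eq0 => [/allP h|j _]; last by rewrite -expr2 sqr_ge0.
apply/eqP/rowP => j; rewrite mxE.
by have := h j (mem_index_enum j); rewrite implyTb mulf_eq0 orbb => /eqP.
Qed.

Lemma dot_gt0 u : u != 0 -> 0 < dot u u.
Proof. by move=> nz; rewrite lt_def dot_eq0 nz dot_ge0. Qed.

Definition refl_mx a : 'M[R]_n := 1%:M - (2 / dot a a) *: (a^T *m a).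

Lemma reflE a v : refl a v = v *m refl_mx a.
Proof.
rewrite /refl /refl_mx mulmxBr mulmx1 -scalemxAr mulmxA.
rewrite [v *m a^T]mx11_scalar mul_scalar_mx scalerA.
by congr (_ - _ *: _); rewrite /dot mulrAC.
Qed.

Lemma reflD a u v : refl a (u + v) = refl a u + refl a v.
Proof. by rewrite !reflE mulmxDl. Qed.

Lemma reflZ a k u : refl a (k *: u) = k *: refl a u.
Proof. by rewrite !reflE scalemxAl. Qed.

Lemma reflN a u : refl a (- u) = - refl a u.
Proof. by rewrite !reflE mulNmx. Qed.

Lemma refl0 a : refl a 0 = 0.
Proof. by rewrite reflE mul0mx. Qed.

Lemma subr_refl a v : v - refl a v = (2 * dot v a / dot a a) *: a.
Proof. by rewrite /refl opprB addrC subrK. Qed.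


Lemma refl_self a : dot a a != 0 -> refl a a = - a.
Proof.
move=> nz; rewrite /refl mulfK //.
by rewrite scaler_nat mulr2n opprD addrA subrr add0r.
Qed.

Lemma reflK a : dot a a != 0 -> involutive (refl a).
Proof.
move=> nz v; rewrite {2}/refl -scaleNr reflD reflZ refl_self //.
by rewrite scaleNr scalerN opprK /refl subrK.
Qed.

Lemma refl_eq0 a v : dot a a != 0 -> (refl a v == 0) = (v == 0).
Proof. by move=> nz; rewrite -{1}(refl0 a) (inj_eq (can_inj (reflK nz))). Qed.

Lemma dot_refl a u v : dot a a != 0 -> dot (refl a u) (refl a v) = dot u v.
Proof.
move=> nz; rewrite /refl !(dotBl, dotBr, dotZl, dotZr) ?(dotC a u) ?(dotC a v).
by field.
Qed.


Lemma conv_mono S S' x : (forall y, S y -> S' y) -> conv S x -> conv S' x.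
Proof. by move=> h [k [p [t [hp ht hs ->]]]]; exists k, p, t; split => // i; apply: h. Qed.

Lemma conv_pt S x : S x -> conv S x.
Proof.
move=> hx; exists 1%N, (fun _ => x), (fun _ => 1); split => //.
- by rewrite big_ord1.
- by rewrite big_ord1 scale1r.
Qed.

Lemma conv_dot_le S c M y : conv S y ->
  (forall p, S p -> dot c p <= M) -> dot c y <= M.
Proof.
move=> [k [p [t [hp ht hs ->]]]] h.
rewrite dot_sumr (_ : M = \sum_(i < k) t i * M); last by rewrite -mulr_suml hs mul1r.
by apply: ler_sum => i _; rewrite dotZr ler_wpM2l ?h.
Qed.

Lemma conv_dot_eq S c M y : conv S y ->
  (forall p, S p -> dot c p = M) -> dot c y = M.
Proof.
move=> [k [p [t [hp ht hs ->]]]] h.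
rewrite dot_sumr (_ : M = \sum_(i < k) t i * M); last by rewrite -mulr_suml hs mul1r.
by apply: eq_bigr => i _; rewrite dotZr h.
Qed.

Lemma seq_argmin (T : eqType) (r : seq T) (g : T -> R) x0 : x0 \in r ->
  exists2 x, x \in r & forall y, y \in r -> g x <= g y.
Proof.
elim: r x0 => // a r IH x0 _; case: r IH => [|b r] IH.
  by exists a; rewrite ?mem_head // => y; rewrite mem_seq1 => /eqP ->.
have [x hx hmin] := IH b (mem_head _ _).
case: (leP (g a) (g x)) => h.
  exists a; first exact: mem_head.
  by move=> y; rewrite in_cons => /orP [/eqP -> //|/hmin/(le_trans h)].
exists x; first by rewrite in_cons hx orbT.
by move=> y; rewrite in_cons => /orP [/eqP ->|/hmin //]; apply: ltW.
Qed.

End Euclid.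

Lemma connect_homo (T T' : finType) (e : rel T) (e' : rel T') (f : T -> T') x y :
  (forall u v, e u v -> e' (f u) (f v)) -> connect e x y -> connect e' (f x) (f y).
Proof.
move=> h /connectP [p hp ->]; apply/connectP; exists (map f p); last by rewrite last_map.
by elim: p x hp => //= z p IH x /andP [/h -> /IH].
Qed.

Lemma connect_restrict (T : finType) (e : rel T) (a : {set T}) x y :
  (forall u v, u \in a -> e u v -> v \in a) -> x \in a -> connect e x y ->
  connect [rel u v | [&& u \in a, v \in a & e u v]] x y.
Proof.
move=> h hx /connectP [p hp ->]; apply/connectP; exists p => //.
elim: p x hx hp => //= z p IH x hx /andP [exz hp].
by rewrite hx (h _ _ hx exz) exz IH // (h _ _ hx exz).
Qed.

Section RootSystem.
Variables (R : realType) (n : nat) (Phi : seq 'rV[R]_n) (alpha : 'I_n -> 'rV[R]_n).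
Hypothesis HR : is_irred_reduced_root_system Phi.
Hypothesis HB : is_base Phi alpha.
Notation vec := 'rV[R]_n.
Implicit Types (u v x y b c : vec) (s t : seq 'I_n).

Definition base_mx : 'M[R]_n := \matrix_(i < n) alpha i.

Lemma base_mx_unit : base_mx \in unitmx.
Proof. by case: HB => _ rf _; rewrite -row_free_unit. Qed.

Definition coord x i := (x *m invmx base_mx) 0 i.

Lemma coord_decomp x : x = \sum_i coord x i *: alpha i.
Proof.
have -> : \sum_i coord x i *: alpha i = x *m invmx base_mx *m base_mx.
  by rewrite mulmx_sum_row; apply: eq_bigr => i _; rewrite rowK.
by rewrite mulmxKV // base_mx_unit.
Qed.

Lemma coord_sum (c : 'I_n -> R) j : coord (\sum_i c i *: alpha i) j = c j.
Proof.
have -> : \sum_i c i *: alpha i = (\row_i c i) *m base_mx.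
  by rewrite mulmx_sum_row; apply: eq_bigr => i _; rewrite mxE rowK.
by rewrite /coord mulmxK ?base_mx_unit // mxE.
Qed.

Lemma coordD x y i : coord (x + y) i = coord x i + coord y i.
Proof. by rewrite /coord mulmxDl mxE. Qed.

Lemma coordZ k x i : coord (k *: x) i = k * coord x i.
Proof. by rewrite /coord -scalemxAl mxE. Qed.

Lemma coordN x i : coord (- x) i = - coord x i.
Proof. by rewrite /coord mulNmx mxE. Qed.

Lemma coordB x y i : coord (x - y) i = coord x i - coord y i.
Proof. by rewrite coordD coordN. Qed.

Lemma coord0 i : coord 0 i = 0.
Proof. by rewrite /coord mul0mx mxE. Qed.

Lemma coord_alpha i j : coord (alpha i) j = (i == j)%:R.
Proof.
rewrite [alpha i](_ : _ = \sum_k (i == k)%:R *: alpha k) ?coord_sum //.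
rewrite (bigD1 i) //= eqxx scale1r big1 ?addr0 // => k.
by rewrite eq_sym => /negbTE ->; rewrite scale0r.
Qed.

Lemma coord_inj x y : (forall i, coord x i = coord y i) -> x = y.
Proof.
by move=> h; rewrite (coord_decomp x) (coord_decomp y); apply: eq_bigr => i _; rewrite h.
Qed.

Lemma dot_coord x y : dot x y = \sum_i coord x i * dot (alpha i) y.
Proof. by rewrite {1}(coord_decomp x) dot_suml; apply: eq_bigr => i _; rewrite dotZl. Qed.

Definition pos_cone x := [forall i, 0 <= coord x i].

Lemma pos_coneP x : reflect (forall i, 0 <= coord x i) (pos_cone x).
Proof. exact: forallP. Qed.

Lemma pos_coneD x y : pos_cone x -> pos_cone y -> pos_cone (x + y).
Proof. by move=> /pos_coneP hx /pos_coneP hy; apply/pos_coneP => i; rewrite coordD addr_ge0. Qed.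

Lemma pos_coneZ k x : 0 <= k -> pos_cone x -> pos_cone (k *: x).
Proof. by move=> hk /pos_coneP hx; apply/pos_coneP => i; rewrite coordZ mulr_ge0. Qed.

Lemma pos_cone_alpha i : pos_cone (alpha i).
Proof. by apply/pos_coneP => j; rewrite coord_alpha ler0n. Qed.

Lemma pos_cone0 : pos_cone 0.
Proof. by apply/pos_coneP => j; rewrite coord0. Qed.

Lemma pos_cone_antisym x : pos_cone x -> pos_cone (- x) -> x = 0.
Proof.
move=> /pos_coneP h1 /pos_coneP h2; apply: coord_inj => i; rewrite coord0.
by apply/eqP; rewrite eq_le -oppr_ge0 -coordN h2 h1.
Qed.

Definition height x := \sum_i coord x i.

Lemma height_ge0 x : pos_cone x -> 0 <= height x.
Proof. by move=> /pos_coneP h; rewrite sumr_ge0. Qed.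

Lemma root_neq0 b : b \in Phi -> b != 0.
Proof. by case: HR => h0 _ _ _ _ hb; apply: contraNneq h0 => <-. Qed.

Lemma root_dot_gt0 b : b \in Phi -> 0 < dot b b.
Proof. by move=> /root_neq0 /dot_gt0. Qed.

Lemma root_dot_neq0 b : b \in Phi -> dot b b != 0.
Proof. by move=> /root_dot_gt0 /gt_eqF ->. Qed.

Lemma refl_root a b : a \in Phi -> b \in Phi -> refl a b \in Phi.
Proof. by case: HR => _ h _ _ _; apply: h. Qed.

Lemma cartan_int a b : a \in Phi -> b \in Phi ->
  exists z : int, 2 * dot b a / dot a a = z%:~R.
Proof. by case: HR => _ _ h _ _; apply: h. Qed.

Lemma root_reduced a (k : R) : a \in Phi -> k *: a \in Phi -> k = 1 \/ k = -1.
Proof. by case: HR => _ _ _ h _; apply: h. Qed.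

Lemma alpha_root i : alpha i \in Phi.
Proof. by case: HB. Qed.

Lemma alpha_neq0 i : alpha i != 0.
Proof. exact: root_neq0 (alpha_root i). Qed.

Lemma alpha_dot_gt0 i : 0 < dot (alpha i) (alpha i).
Proof. exact: root_dot_gt0 (alpha_root i). Qed.

Lemma alpha_dot_neq0 i : dot (alpha i) (alpha i) != 0.
Proof. exact: root_dot_neq0 (alpha_root i). Qed.

Lemma oppr_root b : b \in Phi -> - b \in Phi.
Proof. by move=> hb; rewrite -refl_self ?root_dot_neq0 // refl_root. Qed.

Lemma root_pos_or_neg b : b \in Phi -> pos_cone b \/ pos_cone (- b).
Proof.
case: HB => _ _ h /h [c [-> hc]].
by case: hc => hc; [left|right]; apply/pos_coneP => i;
  rewrite ?coordN coord_sum ?oppr_ge0 ?ler0z ?lerz0.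
Qed.

Lemma coord_refl_alpha i x j :
  coord (refl (alpha i) x) j =
  coord x j - 2 * dot x (alpha i) / dot (alpha i) (alpha i) * (i == j)%:R.
Proof. by rewrite /refl coordB coordZ coord_alpha. Qed.

Lemma coord_refl_alpha_neq i j x : i != j -> coord (refl (alpha i) x) j = coord x j.
Proof. by move=> /negbTE ij; rewrite coord_refl_alpha ij mulr0 subr0. Qed.

Lemma height_refl_alpha i x :
  height (refl (alpha i) x) = height x - 2 * dot x (alpha i) / dot (alpha i) (alpha i).
Proof.
rewrite /height; under eq_bigr => j _ do rewrite coord_refl_alpha.
rewrite sumrB -mulr_sumr (_ : \sum_j (i == j)%:R = 1) ?mulr1 //.
by rewrite (bigD1 i) //= eqxx big1 ?addr0 // => j; rewrite eq_sym => /negbTE ->.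
Qed.

Lemma alpha_dot_le0 i j : i != j -> dot (alpha i) (alpha j) <= 0.
Proof.
move=> ij; rewrite leNgt; apply/negP => hpos.
have hb : refl (alpha i) (alpha j) \in Phi by rewrite refl_root ?alpha_root.
have ci : coord (refl (alpha i) (alpha j)) i < 0.
  rewrite coord_refl_alpha !coord_alpha eqxx eq_sym (negbTE ij) sub0r oppr_lt0 mulr1.
  by rewrite divr_gt0 ?alpha_dot_gt0 // mulr_gt0 // dotC.
have cj : coord (refl (alpha i) (alpha j)) j = 1.
  by rewrite coord_refl_alpha_neq // coord_alpha eqxx.
case: (root_pos_or_neg hb) => /pos_coneP h.
  by have := h i; rewrite leNgt ci.
by have := h j; rewrite coordN cj oppr_ge0 ler10.
Qed.

(* A positive root other than [alpha i] has a positive coordinate outside [i],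
   which [refl (alpha i)] leaves unchanged. *)
Lemma refl_alpha_pos i b : b \in Phi -> pos_cone b -> b != alpha i ->
  pos_cone (refl (alpha i) b).
Proof.
move=> hb pb nb.
case: (boolP [exists j, (j != i) && (0 < coord b j)]) => [/existsP [j /andP [ji cj]]|].
  case: (root_pos_or_neg (refl_root (alpha_root i) hb)) => // /pos_coneP h.
  by have := h j; rewrite coordN coord_refl_alpha_neq 1?eq_sym // oppr_ge0 leNgt cj.
rewrite negb_exists => /forallP hj.
have eb : b = coord b i *: alpha i.
  rewrite {1}(coord_decomp b) (bigD1 i) //= big1 ?addr0 // => j ji.
  have := hj j; rewrite ji /= -leNgt => hle.
  have /pos_coneP /(_ j) hge := pb.
  rewrite (_ : coord b j = 0) ?scale0r //.
  by apply/eqP; rewrite eq_le hle hge.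
have hb' : coord b i *: alpha i \in Phi by rewrite -eb.
case: (root_reduced (alpha_root i) hb') => hc.
  by move: nb; rewrite eb hc scale1r eqxx.
by have /pos_coneP /(_ i) := pb; rewrite hc ler0N1.
Qed.

Definition wact s : vec -> vec := foldr (fun i f => refl (alpha i) \o f) id s.

Lemma wact_cons i s v : wact (i :: s) v = refl (alpha i) (wact s v).
Proof. by []. Qed.

Lemma wactD s u v : wact s (u + v) = wact s u + wact s v.
Proof. by elim: s => //= i s IH; rewrite IH reflD. Qed.

Lemma wactZ s k v : wact s (k *: v) = k *: wact s v.
Proof. by elim: s => //= i s IH; rewrite IH reflZ. Qed.

Lemma wactN s v : wact s (- v) = - wact s v.
Proof. by elim: s => //= i s IH; rewrite IH reflN. Qed.

Lemma wactB s u v : wact s (u - v) = wact s u - wact s v.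
Proof. by rewrite wactD wactN. Qed.

Lemma wact_sum s (I : Type) (r : seq I) (P : pred I) (F : I -> vec) :
  wact s (\sum_(i <- r | P i) F i) = \sum_(i <- r | P i) wact s (F i).
Proof.
elim/big_rec2: _ => [|i x y _ <-]; last by rewrite wactD.
by rewrite -[0 in LHS](scale0r (0 : vec)) wactZ scale0r.
Qed.

Lemma wact_cat s t v : wact (s ++ t) v = wact s (wact t v).
Proof. by elim: s => //= i s ->. Qed.

Lemma wact_rcons s i v : wact (rcons s i) v = wact s (refl (alpha i) v).
Proof. by rewrite -cats1 wact_cat. Qed.

Lemma wact_revK s : cancel (wact s) (wact (rev s)).
Proof.
elim: s => //= i s IH v.
by rewrite rev_cons wact_rcons reflK ?alpha_dot_neq0.
Qed.

Lemma wact_Krev s : cancel (wact (rev s)) (wact s).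
Proof. by move=> v; have := wact_revK (rev s) v; rewrite revK. Qed.

Lemma wact_inj s : injective (wact s).
Proof. exact: can_inj (wact_revK s). Qed.

Lemma dot_wact s u v : dot (wact s u) (wact s v) = dot u v.
Proof. by elim: s => //= i s <-; rewrite dot_refl ?alpha_dot_neq0. Qed.

Lemma wact_root s b : b \in Phi -> wact s b \in Phi.
Proof. by elim: s => //= i s IH hb; rewrite refl_root ?alpha_root ?IH. Qed.

Lemma wact_weyl s : weyl Phi (wact s).
Proof. by elim: s => [|i s IH]; [exact: weyl_id | exact: weyl_step (alpha_root i) IH]. Qed.

Lemma wact_refl s a v : dot a a != 0 -> wact s (refl a v) = refl (wact s a) (wact s v).
Proof. by move=> nz; rewrite {2}/refl !dot_wact /refl wactB wactZ. Qed.

(* Descent on the height: a positive root that is not simple pairs positively with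
   some simple root [alpha j], and [refl (alpha j)] lowers its height by a positive
   integer. *)
Lemma pos_root_wact_alpha (N : nat) b : b \in Phi -> pos_cone b -> height b < N%:R ->
  exists t i, b = wact t (alpha i).
Proof.
elim: N b => [|N IH] b hb pb hN.
  by move: hN; rewrite ltNge height_ge0.
case: (boolP [exists i, b == alpha i]) => [/existsP [i /eqP ->]|].
  by exists [::], i.
rewrite negb_exists => /forallP nb.
have [j hj] : exists j, 0 < dot b (alpha j).
  apply/existsP; apply: contraT; rewrite negb_exists => /forallP hj.
  have := root_dot_gt0 hb; rewrite {1}dot_coord ltNge => /negP []; apply: sumr_le0 => i _.
  rewrite dotC mulr_ge0_le0 //; first by have /pos_coneP := pb.
  by have := hj i; rewrite -leNgt.
set b' := refl (alpha j) b.
have hb' : b' \in Phi by rewrite refl_root ?alpha_root.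
have [z hz] := cartan_int (alpha_root j) hb.
have k1 : 1 <= 2 * dot b (alpha j) / dot (alpha j) (alpha j).
  have : 0 < 2 * dot b (alpha j) / dot (alpha j) (alpha j).
    by rewrite divr_gt0 ?alpha_dot_gt0 // mulr_gt0.
  by rewrite hz ltr0z ler1z.
have [t [i ht]] : exists t i, b' = wact t (alpha i).
  apply: IH => //; first exact: refl_alpha_pos.
  by rewrite /b' height_refl_alpha; move: hN; rewrite -natr1; lra.
by exists (j :: t), i; rewrite wact_cons -ht /b' reflK ?alpha_dot_neq0.
Qed.

Lemma root_wact_alpha b : b \in Phi -> exists t i, b = wact t (alpha i).
Proof.
have hpos c : c \in Phi -> pos_cone c -> exists t i, c = wact t (alpha i).
  move=> hc pc; apply: (@pos_root_wact_alpha (Num.bound (height c))) => //.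
  exact/archi_boundP/height_ge0.
move=> hb; case: (root_pos_or_neg hb) => pb; first exact: hpos.
have [t [i ht]] := hpos _ (oppr_root hb) pb.
by exists (rcons t i), i; rewrite wact_rcons refl_self ?alpha_dot_neq0 // wactN -ht opprK.
Qed.

Lemma weyl_wact w : weyl Phi w -> exists s, w =1 wact s.
Proof.
elim => [|a w' ha _ [s hs]]; first by exists [::].
have [t [i ht]] := root_wact_alpha ha.
exists (t ++ i :: rev t ++ s) => v /=.
by rewrite wact_cat wact_cons wact_cat -hs wact_refl ?alpha_dot_neq0 // -ht wact_Krev.
Qed.

Definition del k s := take k s ++ drop k.+1 s.

Lemma size_del k s : (k < size s)%N -> size (del k s) = (size s).-1.
Proof. by move=> hk; rewrite /del size_cat size_take size_drop hk; lia. Qed.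

Lemma wact_refl_del s i : ~~ pos_cone (wact s (alpha i)) ->
  exists2 k, (k < size s)%N & forall v, wact s (refl (alpha i) v) = wact (del k s) v.
Proof.
elim: s => [|j s IH] h; first by rewrite /= pos_cone_alpha in h.
case: (boolP (pos_cone (wact s (alpha i)))) => hp.
  have e : wact s (alpha i) = alpha j.
    apply/eqP; apply: contraNT h => ne.
    exact: refl_alpha_pos (wact_root _ (alpha_root i)) hp ne.
  exists 0%N => // v.
  by rewrite /del /= drop0 wact_refl ?alpha_dot_neq0 // e reflK ?alpha_dot_neq0.
have [k hk hv] := IH hp.
by exists k.+1 => // v; rewrite wact_cons hv.
Qed.

Definition reduced s := forall t, wact t =1 wact s -> (size s <= size t)%N.

Lemma exists_reduced s : exists2 t, wact t =1 wact s & reduced t.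
Proof.
have hex : exists m, `[< exists t, wact t =1 wact s /\ size t = m >].
  by exists (size s); apply/asboolP; exists s.
case: (ex_minnP hex) => m /asboolP [t [ht <-]] hmin.
exists t => // u hu; apply: hmin; apply/asboolP; exists u; split => // v.
by rewrite hu ht.
Qed.

Lemma reduced_rcons s i : reduced (rcons s i) -> reduced s /\ pos_cone (wact s (alpha i)).
Proof.
move=> hmin; split.
  move=> t ht; suff : (size (rcons s i) <= size (rcons t i))%N by rewrite !size_rcons.
  by apply: hmin => v; rewrite !wact_rcons ht.
apply: contraT => np; have [k hk hv] := wact_refl_del np.
suff : (size (rcons s i) <= size (del k s))%N by rewrite size_rcons size_del //; lia.
by apply: hmin => v; rewrite wact_rcons hv.
Qed.

Definition dominant x := forall i, 0 <= dot x (alpha i).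

Lemma dominant_sub_wact x s : dominant x -> pos_cone (x - wact s x).
Proof.
move=> hx; have [t ht hred] := exists_reduced s.
rewrite -ht; elim/last_ind: t hred {ht} => [|t i IH] hred.
  by rewrite subrr pos_cone0.
have [/IH ht hpos] := reduced_rcons hred.
have -> : x - wact (rcons t i) x = (x - wact t x) + wact t (x - refl (alpha i) x).
  by rewrite wact_rcons wactB addrA subrK.
rewrite subr_refl wactZ pos_coneD // pos_coneZ // divr_ge0 ?mulr_ge0 ?hx //.
exact/ltW/alpha_dot_gt0.
Qed.

Lemma dominant_wact_eq x s : dominant x -> dominant (wact s x) -> wact s x = x.
Proof.
move=> hx hy; have := dominant_sub_wact (rev s) hy; rewrite wact_revK => h.
by apply/eqP; rewrite -subr_eq0; apply/eqP/pos_cone_antisym; rewrite ?opprB // dominant_sub_wact.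
Qed.

Definition worbit c v := exists s, v = wact s c.

Lemma worbit_self c : worbit c c.
Proof. by exists [::]. Qed.

Lemma worbit_wact c s v : worbit c v -> worbit c (wact s v).
Proof. by case=> t ->; exists (s ++ t); rewrite wact_cat. Qed.

Lemma worbit_wactr c s v : worbit c (wact s v) -> worbit c v.
Proof. by move=> /(worbit_wact (rev s)); rewrite wact_revK. Qed.

(* Every orbit point is [\sum_i coord c i *: w (alpha i)] with each [w (alpha i)] a root,
   so the orbit is contained in this finite list. *)
Definition orbit_cands c : seq vec :=
  [seq \sum_i coord c i *: nth 0 Phi (f i)
  | f : {ffun 'I_n -> 'I_(size Phi).+1} <- enum {ffun 'I_n -> 'I_(size Phi).+1}].

Lemma worbit_cands c v : worbit c v -> v \in orbit_cands c.
Proof.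
move=> [s ->]; apply/mapP.
exists [ffun i => inord (index (wact s (alpha i)) Phi)]; first by rewrite mem_enum.
rewrite {1}(coord_decomp c) wact_sum; apply: eq_bigr => i _; rewrite wactZ ffunE.
have hi : wact s (alpha i) \in Phi by apply/wact_root/alpha_root.
by rewrite inordK ?nth_index // ltnS ltnW // index_mem.
Qed.

Definition orbit_enum c : seq vec := undup [seq v <- orbit_cands c | `[< worbit c v >]].

Lemma orbit_enum_uniq c : uniq (orbit_enum c).
Proof. exact: undup_uniq. Qed.

Lemma orbit_enumP c v : v \in orbit_enum c <-> worbit c v.
Proof.
rewrite mem_undup mem_filter; split => [/andP [/asboolP //]|hv].
by rewrite worbit_cands // andbT; apply/asboolP.
Qed.

(* A point of maximal height in the orbit is dominant, since [refl (alpha i)] raises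
   the height of [x] when [dot x (alpha i) < 0]. *)
Lemma exists_dominant_wact c : exists s, dominant (wact s c).
Proof.
have hc : c \in orbit_enum c by apply/orbit_enumP/worbit_self.
have [y /orbit_enumP [s ->] hmax] := seq_argmin (fun v => - height v) hc.
exists s => i; rewrite leNgt; apply/negP => hlt.
have /hmax : refl (alpha i) (wact s c) \in orbit_enum c.
  by apply/orbit_enumP; exists (i :: s).
rewrite height_refl_alpha lerN2 gerBl -mulrA pmulr_rge0 // pmulr_lge0 ?invr_gt0 ?alpha_dot_gt0 //.
by rewrite leNgt hlt.
Qed.

Variable lam : vec.
Hypothesis HD : dominant_integral alpha lam.
Implicit Types (X Z : {set 'I_n}).

Lemma lam_dominant : dominant lam.
Proof.
move=> i; have [m hm] := HD i.
have : 0 <= 2 * dot lam (alpha i) / dot (alpha i) (alpha i) by rewrite hm ler0n.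
by rewrite -mulrA pmulr_rge0 // pmulr_lge0 // invr_gt0 alpha_dot_gt0.
Qed.

Local Notation Pol := (conv (worbit lam)).

Lemma weyl_orbitE x : (exists w, weyl Phi w /\ x = w lam) <-> worbit lam x.
Proof.
split=> [[w [/weyl_wact [s hs] ->]]|[s ->]]; first by exists s.
by exists (wact s); split => //; apply: wact_weyl.
Qed.

Lemma weight_polytopeE x : weight_polytope Phi lam x <-> Pol x.
Proof. by split; apply: conv_mono => y /weyl_orbitE. Qed.

Lemma Pol_lam : Pol lam.
Proof. exact/conv_pt/worbit_self. Qed.

Lemma Pol_wact s x : Pol x -> Pol (wact s x).
Proof.
move=> [k [p [t [hp ht hs ->]]]]; exists k, (fun i => wact s (p i)), t; split => //.
- by move=> i; apply: worbit_wact.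
- by rewrite wact_sum; apply: eq_bigr => i _; rewrite wactZ.
Qed.

Lemma Pol_wactr s x : Pol (wact s x) -> Pol x.
Proof. by move=> /(Pol_wact (rev s)); rewrite wact_revK. Qed.

Definition orbit_sum (F : vec -> Prop) : vec := \sum_(v <- orbit_enum lam | `[< F v >]) v.

Definition wimage s (F : vec -> Prop) : vec -> Prop := fun y => exists x, F x /\ y = wact s x.

Lemma orbit_sum_ext F G : (forall v, F v <-> G v) -> orbit_sum F = orbit_sum G.
Proof. by move=> h; apply: eq_bigl => v; apply/asboolP/asboolP => /h. Qed.

Lemma orbit_sum_wimage s F : orbit_sum (wimage s F) = wact s (orbit_sum F).
Proof.
rewrite /orbit_sum wact_sum -[LHS]big_filter -[RHS]big_filter.
rewrite -(big_map (wact s) xpredT id).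
apply: perm_big; apply: uniq_perm.
- exact: filter_uniq (orbit_enum_uniq lam).
- by rewrite map_inj_uniq ?filter_uniq ?orbit_enum_uniq //; apply: wact_inj.
move=> y; rewrite mem_filter; apply/andP/mapP => [[/asboolP [x [hx ->]] hy]|[x]].
  exists x => //; rewrite mem_filter; apply/andP; split; first exact/asboolP.
  by apply/orbit_enumP/(@worbit_wactr _ s)/orbit_enumP.
rewrite mem_filter => /andP [/asboolP hx /orbit_enumP hxO] ->; split.
  by apply/asboolP; exists x.
exact/orbit_enumP/worbit_wact.
Qed.

Definition face_of c x := Pol x /\ forall y, Pol y -> dot c y <= dot c x.

Lemma weight_faceE c x :
  (weight_polytope Phi lam x /\ forall y, weight_polytope Phi lam y -> dot c y <= dot c x)
  <-> face_of c x.
Proof.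
split=> -[hx h]; split=> [|y hy].
- exact/weight_polytopeE.
- by apply: h; apply/weight_polytopeE.
- exact/weight_polytopeE.
- by apply: h; apply/weight_polytopeE.
Qed.

Lemma face_of_wact s c x : face_of (wact s c) (wact s x) <-> face_of c x.
Proof.
split=> -[hx h]; split.
- exact: Pol_wactr hx.
- by move=> y hy; have := h (wact s y) (Pol_wact s hy); rewrite !dot_wact.
- exact: Pol_wact.
- move=> y hy; rewrite -(wact_Krev s y) !dot_wact; apply: h.
  by apply: (@Pol_wactr s); rewrite wact_Krev.
Qed.

Lemma face_of_wimage s c x : face_of (wact s c) x <-> wimage s (face_of c) x.
Proof.
split=> [h|[y [hy ->]]]; last exact/face_of_wact.
exists (wact (rev s) x); rewrite wact_Krev; split => //.
by apply/(face_of_wact s); rewrite wact_Krev.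
Qed.

Lemma orbit_dot_le c v : dominant c -> worbit lam v -> dot c v <= dot c lam.
Proof.
move=> hc [s ->]; rewrite -subr_ge0 -dotBr dotC dot_coord.
apply: sumr_ge0 => i _; rewrite dotC mulr_ge0 //.
exact/pos_coneP/dominant_sub_wact/lam_dominant.
Qed.

Lemma face_of_dominant c x : dominant c -> face_of c x <-> Pol x /\ dot c x = dot c lam.
Proof.
move=> hc; split => [[hx h]|[hx e]].
  split => //; apply/eqP; rewrite eq_le (h lam Pol_lam) andbT.
  by apply: conv_dot_le hx _ => p; apply: orbit_dot_le.
by split => // y hy; rewrite e; apply: conv_dot_le hy _ => p; apply: orbit_dot_le.
Qed.

Definition zero_nodes c : {set 'I_n} := [set i | dot c (alpha i) == 0].

(* The orbit points [lam - \sum_(i in Z) k_i alpha_i]: vertices of the standard face of type [Z]. *)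
Definition std_vertex (Z : {set 'I_n}) v :=
  worbit lam v /\ forall i, i \notin Z -> coord (lam - v) i = 0.

Lemma std_vertex_lam Z : std_vertex Z lam.
Proof. by split=> [|i _]; rewrite ?subrr ?coord0 //; apply: worbit_self. Qed.

Lemma std_vertex_coord_ge0 Z v k : std_vertex Z v -> 0 <= coord (lam - v) k.
Proof. by case=> [[s ->]] _; apply/pos_coneP/dominant_sub_wact/lam_dominant. Qed.

Lemma std_vertex_mono Z (Z' : {set 'I_n}) v : Z \subset Z' -> std_vertex Z v -> std_vertex Z' v.
Proof. by move=> hs [hO h]; split => // i hi; apply/h/(contraNN _ hi)/subsetP. Qed.

Lemma orbit_dot_eq c v : dominant c -> worbit lam v ->
  dot c v = dot c lam <-> std_vertex (zero_nodes c) v.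
Proof.
move=> hc hv.
have e : dot c lam - dot c v = \sum_i coord (lam - v) i * dot c (alpha i).
  by rewrite -dotBr dotC dot_coord; apply: eq_bigr => i _; rewrite dotC.
have hge i : 0 <= coord (lam - v) i * dot c (alpha i).
  rewrite mulr_ge0 //; case: hv => s ->.
  exact/pos_coneP/dominant_sub_wact/lam_dominant.
split => [h|[_ h]].
  split => // i; rewrite inE => hi.
  move/eqP: e; rewrite h subrr eq_sym => /eqP /(psumr_eq0P (fun i _ => hge i)) /(_ i isT).
  by move/eqP; rewrite mulf_eq0 (negbTE hi) orbF => /eqP.
apply/eqP; rewrite eq_sym -subr_eq0 e; apply/eqP/big1 => i _.
by case: (boolP (i \in zero_nodes c)) => [|/h ->]; rewrite ?inE ?mul0r // => /eqP ->; rewrite mulr0.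
Qed.

(* A face of a dominant [c] is the convex hull of the orbit points it contains, since
   convex weights on points off the face would push the value of [c] below its maximum. *)
Lemma face_of_conv c x : dominant c -> face_of c x <-> conv (std_vertex (zero_nodes c)) x.
Proof.
move=> hc; rewrite face_of_dominant //; split => [[hx e]|hx].
  case: hx e => k [p [t [hp ht hs ->]]] e.
  have hle i : 0 <= t i * (dot c lam - dot c (p i)) by rewrite mulr_ge0 // subr_ge0 orbit_dot_le.
  have h0 : \sum_i t i * (dot c lam - dot c (p i)) = 0.
    under eq_bigr => i _ do rewrite mulrBr -[t i * dot c (p i)]dotZr.
    by rewrite sumrB -mulr_suml hs mul1r -dot_sumr e subrr.
  have hz := psumr_eq0P (fun i _ => hle i) h0.
  exists k, (fun i => if t i == 0 then lam else p i), t; split => //.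
    move=> i; case: eqP => [_|/eqP ti]; first exact: std_vertex_lam.
    apply/orbit_dot_eq => //; apply/eqP; move/eqP: (hz i isT).
    by rewrite mulf_eq0 (negbTE ti) /= subr_eq0 eq_sym.
  by apply: eq_bigr => i _; case: eqP => // ->; rewrite !scale0r.
split; first by apply: conv_mono hx => y [].
by apply: conv_dot_eq hx _ => p [hp hz]; apply/orbit_dot_eq.
Qed.

Definition std_vertices Z := [seq v <- orbit_enum lam | `[< std_vertex Z v >]].

Definition std_sum Z := \sum_(v <- std_vertices Z) v.

Lemma std_verticesP Z v : v \in std_vertices Z <-> std_vertex Z v.
Proof.
rewrite mem_filter; split => [/andP [/asboolP //]|hv].
by apply/andP; split; [apply/asboolP | apply/orbit_enumP; case: hv].
Qed.

Lemma orbit_sum_face c : dominant c -> orbit_sum (face_of c) = std_sum (zero_nodes c).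
Proof.
move=> hc; rewrite /std_sum big_filter /orbit_sum [LHS]big_seq_cond [RHS]big_seq_cond.
apply: eq_bigl => v; case: (boolP (v \in orbit_enum lam)) => //= /orbit_enumP hv.
apply/asboolP/asboolP; rewrite face_of_dominant //.
  by case=> _ /(orbit_dot_eq hc hv).
by move=> /(orbit_dot_eq hc hv) e; split => //; apply/conv_pt.
Qed.

Lemma coord_sub_refl j v i :
  coord (lam - refl (alpha j) v) i =
  coord (lam - v) i + 2 * dot v (alpha j) / dot (alpha j) (alpha j) * (j == i)%:R.
Proof.
have -> : lam - refl (alpha j) v = (lam - v) + (v - refl (alpha j) v) by rewrite addrA subrK.
by rewrite subr_refl coordD coordZ coord_alpha.
Qed.

Lemma std_vertex_refl Z j v : j \in Z -> std_vertex Z v -> std_vertex Z (refl (alpha j) v).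
Proof.
move=> hj [hO h]; split; first exact: (worbit_wact [:: j]).
move=> i hi; rewrite coord_sub_refl h // (_ : (j == i) = false) ?mulr0 ?addr0 //.
by apply: contraNF hi => /eqP <-.
Qed.

Lemma perm_std_vertices Z j : j \in Z ->
  perm_eq [seq refl (alpha j) v | v <- std_vertices Z] (std_vertices Z).
Proof.
move=> hj; apply: uniq_perm.
- rewrite map_inj_uniq ?filter_uniq ?orbit_enum_uniq //.
  exact: can_inj (reflK (alpha_dot_neq0 j)).
- exact: filter_uniq (orbit_enum_uniq lam).
move=> y; apply/mapP/idP => [[x /std_verticesP hx ->]|/std_verticesP hy].
  exact/std_verticesP/std_vertex_refl.
exists (refl (alpha j) y); last by rewrite reflK ?alpha_dot_neq0.
exact/std_verticesP/std_vertex_refl.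
Qed.

Lemma std_sum_orth Z j : j \in Z -> dot (std_sum Z) (alpha j) = 0.
Proof.
move=> hj; have e : refl (alpha j) (std_sum Z) = std_sum Z.
  rewrite /std_sum reflE mulmx_suml; under eq_bigr => v _ do rewrite -reflE.
  by rewrite -(big_map (refl (alpha j)) xpredT id) (perm_big _ (perm_std_vertices hj)).
move/eqP: e; rewrite eq_sym -subr_eq0 subr_refl scaler_eq0 (negbTE (alpha_neq0 j)) orbF.
by rewrite mulf_eq0 invr_eq0 (negbTE (alpha_dot_neq0 j)) orbF mulf_eq0 pnatr_eq0 => /eqP.
Qed.

Lemma std_vertex_dot v i : dot v (alpha i) =
  dot lam (alpha i) + \sum_k - (coord (lam - v) k * dot (alpha k) (alpha i)).
Proof. by rewrite sumrN -dot_coord dotBl opprB addrC subrK. Qed.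

(* Distinct simple roots are obtuse. *)
Lemma std_vertex_dot_term_ge0 Z v i k : std_vertex Z v -> coord (lam - v) i = 0 ->
  0 <= - (coord (lam - v) k * dot (alpha k) (alpha i)).
Proof.
move=> hv hi; case: (eqVneq k i) => [->|ki]; first by rewrite hi mul0r oppr0.
by rewrite oppr_ge0 mulr_ge0_le0 ?alpha_dot_le0 // (std_vertex_coord_ge0 k hv).
Qed.

Lemma std_vertex_dot_ge Z v i : std_vertex Z v -> coord (lam - v) i = 0 ->
  dot lam (alpha i) <= dot v (alpha i).
Proof.
move=> hv hi; rewrite (std_vertex_dot v i) lerDl sumr_ge0 // => k _.
exact: std_vertex_dot_term_ge0 hv hi.
Qed.

Lemma std_sum_dominant Z : dominant (std_sum Z).
Proof.
move=> i; case: (boolP (i \in Z)) => hi; first by rewrite std_sum_orth.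
rewrite /std_sum dot_suml big_seq sumr_ge0 // => v /std_verticesP hv.
by apply: le_trans (lam_dominant i) (std_vertex_dot_ge hv _); case: hv => _ ->.
Qed.

Definition used_nodes Z : {set 'I_n} :=
  [set k | `[< exists v, std_vertex Z v /\ coord (lam - v) k != 0 >]].

Lemma used_nodes_sub Z : used_nodes Z \subset Z.
Proof.
apply/subsetP => k; rewrite inE => /asboolP [v [[_ hv] hk]].
by apply: contraNT hk => /hv ->.
Qed.

Lemma std_vertex_used Z v : std_vertex Z v -> std_vertex (used_nodes Z) v.
Proof.
move=> hv; split; first by case: hv.
move=> i hi; apply/eqP; apply: contraNT hi => ne; rewrite inE; apply/asboolP.
by exists v.
Qed.

Lemma std_sum_orth_unused Z i : dot (std_sum Z) (alpha i) = 0 -> i \notin used_nodes Z ->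
  dot lam (alpha i) = 0 /\ forall k, k \in used_nodes Z -> dot (alpha k) (alpha i) = 0.
Proof.
move=> h0 hi.
have hc0 v : std_vertex Z v -> coord (lam - v) i = 0.
  move=> hv; apply/eqP; apply: contraNT hi => ne; rewrite inE; apply/asboolP.
  by exists v.
have hz v : std_vertex Z v -> dot v (alpha i) = 0.
  move: h0; rewrite /std_sum dot_suml big_seq_cond => /eqP; rewrite psumr_eq0.
    move=> /allP H hv; have hv' : v \in std_vertices Z by apply/std_verticesP.
    by have := H v hv'; rewrite hv' /= => /eqP.
  move=> u /andP [/std_verticesP hu _].
  exact: le_trans (lam_dominant i) (std_vertex_dot_ge hu (hc0 u hu)).
have hl : dot lam (alpha i) = 0 by apply/hz/std_vertex_lam.
split => // k; rewrite inE => /asboolP [v [hv hk]].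
have := hz v hv; rewrite (std_vertex_dot v i) hl add0r => hs.
have := psumr_eq0P (fun k _ => std_vertex_dot_term_ge0 k hv (hc0 v hv)) hs.
by move=> /(_ k isT) /eqP; rewrite oppr_eq0 mulf_eq0 (negbTE hk) /= => /eqP.
Qed.

Definition linked i j := (i != j) && (dot (alpha i) (alpha j) != 0).

Definition linked_in (X : {set 'I_n}) : rel 'I_n :=
  fun i j => [&& i \in X, j \in X & linked i j].

Definition lam_part (X : {set 'I_n}) : {set 'I_n} :=
  [set i in X | [exists j, [&& j \in X, 0 < dot lam (alpha j) & connect (linked_in X) i j]]].

Lemma linked_in_sym X : symmetric (linked_in X).
Proof. by move=> i j; rewrite /linked_in /linked eq_sym dotC; case: (i \in X); case: (j \in X). Qed.

Lemma linked_in_csym X : connect_sym (linked_in X).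
Proof. exact/sym_connect_sym/linked_in_sym. Qed.

Lemma linked_in_closed X : closed (linked_in X) X.
Proof.
have hstep (u v : 'I_n) : linked_in X u v -> u \in X -> v \in X by move=> /and3P [_ hv _] _.
exact (intro_closed (linked_in_csym X) hstep).
Qed.

Lemma lam_part_sub X : lam_part X \subset X.
Proof. by apply/subsetP => i; rewrite inE => /andP []. Qed.

Lemma lam_part_eq (X S : {set 'I_n}) : S \subset X ->
  (forall i, i \in X -> i \notin S ->
     dot lam (alpha i) = 0 /\ forall k, k \in S -> dot (alpha k) (alpha i) = 0) ->
  (forall i, i \in S ->
     exists j, [/\ j \in S, 0 < dot lam (alpha j) & connect (linked_in S) i j]) ->
  lam_part X = S.
Proof.
move=> hSX h1 h2; apply/setP => i; apply/idP/idP.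
  rewrite inE => /andP [hiX /existsP [j /and3P [hjX hj hc]]].
  have hjS : j \in S.
    by apply: contraT => /(h1 j hjX) [h0 _]; rewrite h0 ltxx in hj.
  have hstep (u v : 'I_n) : linked_in X u v -> u \in S -> v \in S.
    move=> /and3P [_ hv /andP [_ duv]] hu.
    by apply: contraT => /(h1 v hv) [_ /(_ u hu) h]; rewrite h eqxx in duv.
  have hcl : closed (linked_in X) S := intro_closed (linked_in_csym X) hstep.
  by rewrite (closed_connect hcl hc).
move=> hiS; have [j [hjS hj hc]] := h2 i hiS.
rewrite inE (subsetP hSX _ hiS) /=; apply/existsP; exists j.
rewrite (subsetP hSX _ hjS) hj /=; apply: connect_sub hc => u v /and3P [hu hv ha].
by apply: connect1; rewrite /linked_in (subsetP hSX _ hu) (subsetP hSX _ hv).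
Qed.

Section LamOrthogonalComponent.
Variables (Z C : {set 'I_n}).
Hypothesis C_used : C \subset used_nodes Z.
Hypothesis C_lam : forall k, k \in C -> dot lam (alpha k) = 0.
Hypothesis C_orth : forall k l, k \in C -> l \in used_nodes Z -> l \notin C ->
  dot (alpha k) (alpha l) = 0.

Definition cpart v := \sum_(k in C) coord (lam - v) k *: alpha k.

Lemma coord_cpart v k : coord (cpart v) k = if k \in C then coord (lam - v) k else 0.
Proof.
rewrite /cpart (_ : \sum_(k in C) _ = \sum_k (if k \in C then coord (lam - v) k else 0) *: alpha k).
  by rewrite coord_sum.
by rewrite big_mkcond; apply: eq_bigr => l _; case: ifP; rewrite ?scale0r.
Qed.

Lemma dot_cpart v j : std_vertex Z v -> j \in C -> dot v (alpha j) = - dot (cpart v) (alpha j).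
Proof.
move=> /std_vertex_used [_ hS] hj.
have -> : dot v (alpha j) = - dot (lam - v) (alpha j) by rewrite dotBl C_lam // sub0r opprK.
congr (- _).
rewrite dot_coord /cpart dot_suml (bigID (fun k => k \in C)) /= [X in _ + X]big1 ?addr0.
  by apply: eq_bigr => k _; rewrite dotZl.
move=> k hk; case: (boolP (k \in used_nodes Z)) => hkS; last by rewrite hS // mul0r.
by rewrite dotC C_orth // mulr0.
Qed.

(* Since [refl (alpha j)] fixes [lam] and the part of [lam - v] outside [C], it acts
   on the [C]-part of [lam - v]. *)
Lemma cpart_refl v j : std_vertex Z v -> j \in C ->
  cpart (refl (alpha j) v) = refl (alpha j) (cpart v).
Proof.
move=> hv hj; apply: coord_inj => k.
rewrite coord_refl_alpha !coord_cpart coord_sub_refl (dot_cpart hv hj).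
case: ifP => hk; first by rewrite mulrN !mulNr.
by rewrite (_ : (j == k) = false) ?mulr0 ?subr0 //; apply: contraFF hk => /eqP <-.
Qed.

(* A nonzero [cpart v] of least height pairs positively with some [alpha j], [j] in [C],
   and reflecting [v] in [alpha j] would give a nonzero [cpart] of smaller height. *)
Lemma cpart_eq0 v : std_vertex Z v -> cpart v = 0.
Proof.
move=> hv; apply/eqP; apply: contraT => hnz.
set L := [seq u <- std_vertices Z | cpart u != 0].
have hvL : v \in L by rewrite mem_filter hnz; apply/std_verticesP.
have [u0 hu0L hmin] := seq_argmin (fun u => height (cpart u)) hvL.
move: hu0L; rewrite mem_filter => /andP [hu0 /std_verticesP hu0v].
have [j hj hpos] : exists2 j, j \in C & 0 < dot (cpart u0) (alpha j).
  case: (boolP [exists j in C, 0 < dot (cpart u0) (alpha j)]) => [/exists_inP [j]|].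
    by exists j.
  rewrite negb_exists_in => /forall_inP hle; exfalso; move/negP: hu0; apply.
  rewrite -dot_eq0 eq_le dot_ge0 andbT {2}/cpart dot_sumr; apply: sumr_le0 => k hk.
  rewrite dotZr; apply: mulr_ge0_le0; first exact: std_vertex_coord_ge0 hu0v.
  by rewrite leNgt hle.
have hjZ : j \in Z by apply/(subsetP (used_nodes_sub Z))/(subsetP C_used).
have /hmin : refl (alpha j) u0 \in L.
  rewrite mem_filter cpart_refl // refl_eq0 ?alpha_dot_neq0 // hu0 /=.
  exact/std_verticesP/std_vertex_refl.
rewrite cpart_refl // height_refl_alpha leNgt gtrBl.
by rewrite divr_gt0 ?alpha_dot_gt0 ?mulr_gt0 ?ltr0n.
Qed.

End LamOrthogonalComponent.

Lemma used_nodes_connected Z i : i \in used_nodes Z ->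
  exists j, [/\ j \in used_nodes Z, 0 < dot lam (alpha j)
             & connect (linked_in (used_nodes Z)) i j].
Proof.
move=> hi; apply: contrapT => hno.
set C := [set k | connect (linked_in (used_nodes Z)) i k].
have hCS : C \subset used_nodes Z.
  apply/subsetP => k; rewrite inE => hk.
  by rewrite -(closed_connect (@linked_in_closed (used_nodes Z)) hk).
have hCK k : k \in C -> dot lam (alpha k) = 0.
  move=> hk; apply/eqP; rewrite eq_le lam_dominant andbT leNgt; apply/negP => hp.
  by apply: hno; exists k; split => //; [exact: (subsetP hCS) | rewrite inE in hk].
have hCorth k l : k \in C -> l \in used_nodes Z -> l \notin C -> dot (alpha k) (alpha l) = 0.
  move=> hk hl hn; have kl : k != l by apply: contraNneq hn => <-.
  have hkS := subsetP hCS k hk.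
  apply/eqP; apply: contraNT hn => hd; rewrite /C !inE in hk *.
  apply: connect_trans hk _; apply: connect1.
  by apply/and3P; split => //; apply/andP.
have [v hv hvi] : exists2 v, std_vertex Z v & coord (lam - v) i != 0.
  by move: hi; rewrite inE => /asboolP [v []]; exists v.
have /(congr1 (coord^~ i)) := cpart_eq0 hCS hCK hCorth hv.
by rewrite coord_cpart coord0 inE connect0 => /eqP; rewrite (negbTE hvi).
Qed.

Lemma lam_part_used Z : lam_part Z = used_nodes Z.
Proof.
apply: lam_part_eq; [exact: used_nodes_sub | | exact: used_nodes_connected].
by move=> i hi; apply/std_sum_orth_unused/std_sum_orth.
Qed.

Lemma lam_part_std_sum Z : lam_part (zero_nodes (std_sum Z)) = used_nodes Z.
Proof.
apply: lam_part_eq; last exact: used_nodes_connected.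
  apply/subsetP => k hk; rewrite inE std_sum_orth //.
  exact: (subsetP (used_nodes_sub Z)).
by move=> i; rewrite inE => /eqP; apply: std_sum_orth_unused.
Qed.


Definition dom_word c : seq 'I_n := sval (cid (exists_dominant_wact c)).

Definition dom_rep c := wact (dom_word c) c.

Lemma dom_rep_dominant c : dominant (dom_rep c).
Proof. exact: svalP (cid (exists_dominant_wact c)). Qed.

Lemma dom_rep_id c : dominant c -> dom_rep c = c.
Proof. by move=> hc; apply: dominant_wact_eq hc (dom_rep_dominant c). Qed.

Lemma dom_rep_wact s c : dom_rep (wact s c) = dom_rep c.
Proof.
have e : wact (dom_word (wact s c) ++ s ++ rev (dom_word c)) (dom_rep c) = dom_rep (wact s c).
  by rewrite /dom_rep !wact_cat wact_revK.
rewrite -e dominant_wact_eq //; first exact: dom_rep_dominant.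
by rewrite e; apply: dom_rep_dominant.
Qed.

Definition diagram_of (X : {set 'I_n}) : {set option 'I_n} := None |: [set Some i | i in X].

Definition face_diagram (F : vec -> Prop) : {set option 'I_n} :=
  diagram_of (lam_part (zero_nodes (dom_rep (orbit_sum F)))).

Lemma Some_in_diagram X i : (Some i \in diagram_of X) = (i \in X).
Proof. by rewrite in_setU1 /= (mem_imset _ _ (@Some_inj _)). Qed.

Lemma None_in_diagram X : None \in diagram_of X.
Proof. exact: setU11. Qed.

Lemma diagram_of_inj : injective diagram_of.
Proof. by move=> X Y e; apply/setP => i; rewrite -!Some_in_diagram e. Qed.

Lemma ext_adj_sym : symmetric (ext_adj alpha lam).
Proof. by case=> [i|] [j|] //=; rewrite eq_sym dotC. Qed.

Lemma diagram_lam_part_connected X :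
  connected_sub (ext_adj alpha lam) (diagram_of (lam_part X)).
Proof.
pose T := diagram_of (lam_part X).
pose eT (u v : option 'I_n) := [&& u \in T, v \in T & ext_adj alpha lam u v].
have symT : connect_sym eT.
  apply: sym_connect_sym => u v; rewrite /eT ext_adj_sym.
  by case: (u \in T); case: (v \in T).
have hcl (u v : 'I_n) : u \in lam_part X -> linked_in X u v -> v \in lam_part X.
  rewrite !inE => /andP [hu /existsP [j /and3P [hjX hj hc]]] huv.
  move: (huv) => /and3P [_ -> _] /=; apply/existsP; exists j.
  by rewrite hjX hj /=; apply: connect_trans hc; apply: connect1; rewrite linked_in_sym.
have hN (x : option 'I_n) : x \in T -> connect eT x None.
  case: x => [i|_]; last exact: connect0.
  rewrite Some_in_diagram => hi.
  move: (hi); rewrite inE => /andP [hiX /existsP [j /and3P [hjX hj hc]]].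
  have hjc : j \in lam_part X.
    by rewrite inE hjX /=; apply/existsP; exists j; rewrite hjX hj connect0.
  apply: (connect_trans (y := Some j)).
    apply: connect_homo (connect_restrict hcl hi hc) => u v /and3P [hu hv /and3P [_ _ ha]].
    by rewrite /eT !Some_in_diagram hu hv.
  by apply: connect1; rewrite /eT Some_in_diagram hjc None_in_diagram /= hj.
move=> x y hx hy; apply: (connect_trans (y := None)); first exact: hN.
by rewrite symT; apply: hN.
Qed.

(* In a connected subdiagram through [-lam], every node is joined to [-lam] through a
   last node [j] with [dot lam (alpha j) > 0]. *)
Lemma connected_diagram (S : {set option 'I_n}) :
  None \in S -> connected_sub (ext_adj alpha lam) S ->
  let X := [set i | Some i \in S] in lam_part X = X /\ S = diagram_of X.
Proof.
move=> hS hc X; pose eS (u v : option 'I_n) := [&& u \in S, v \in S & ext_adj alpha lam u v].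
have key (p : seq (option 'I_n)) i : path eS (Some i) p -> None = last (Some i) p ->
    exists j, [&& j \in X, 0 < dot lam (alpha j) & connect (linked_in X) i j].
  elim: p i => [|y p IH] i //= /andP [/and3P [hiS hyS ha] hp] hl.
  case: y ha hyS hp hl => [k|] /= ha hyS hp hl; last by exists i; rewrite inE hiS ha connect0.
  have [j /and3P [hjX hj hcj]] := IH k hp hl.
  exists j; rewrite hjX hj /=; apply: connect_trans hcj.
  by apply: connect1; rewrite /linked_in !inE hiS hyS.
split.
  apply/setP => i; apply/idP/idP => [|hi]; first exact: (subsetP (lam_part_sub X)).
  have hiS : Some i \in S by rewrite inE in hi.
  have /connectP [p hp hl] := hc _ _ hiS hS.
  by have [j hj] := key p i hp hl; rewrite inE hi /=; apply/existsP; exists j.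
apply/setP => [[i|]]; last by rewrite !inE eqxx hS.
by rewrite Some_in_diagram inE.
Qed.

Lemma face_standard F : nonempty_face (weight_polytope Phi lam) F ->
  exists s c, [/\ dominant c, (forall x, face_of c x <-> wimage s F x)
                & dom_rep (orbit_sum F) = std_sum (zero_nodes c)].
Proof.
case=> _ [c hc].
have hF x : F x <-> face_of c x by rewrite hc; apply: weight_faceE.
have [s hs] := exists_dominant_wact c.
have himg x : face_of (wact s c) x <-> wimage s F x.
  rewrite face_of_wimage; split; case=> y [hy ->]; exists y; split => //; exact/hF.
exists s, (wact s c); split => //.
rewrite -(dom_rep_wact s) -orbit_sum_wimage -(orbit_sum_ext himg) orbit_sum_face //.
exact/dom_rep_id/std_sum_dominant.
Qed.

Lemma face_of_used c x : dominant c ->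
  face_of c x <-> conv (std_vertex (used_nodes (zero_nodes c))) x.
Proof.
move=> hc; rewrite face_of_conv //; split; apply: conv_mono => y.
  exact: std_vertex_used.
exact/std_vertex_mono/used_nodes_sub.
Qed.

Lemma exists_dot_alpha (f : 'I_n -> R) : exists c, forall i, dot c (alpha i) = f i.
Proof.
exists (invmx base_mx *m \col_j f j)^T => i.
rewrite dotC /dot trmxK; have -> : alpha i = row i base_mx by rewrite rowK.
by rewrite -row_mul mulmxA mulmxV ?base_mx_unit // mul1mx !mxE.
Qed.

Lemma face_diagram_connected F :
  None \in face_diagram F /\ connected_sub (ext_adj alpha lam) (face_diagram F).
Proof. by split; [apply: None_in_diagram | apply: diagram_lam_part_connected]. Qed.

Lemma face_diagram_eq F G : nonempty_face (weight_polytope Phi lam) F ->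
  nonempty_face (weight_polytope Phi lam) G ->
  face_diagram F = face_diagram G <-> same_W_orbit Phi F G.
Proof.
move=> hF hG; split => [e|[w [hw hGF]]].
  have [s1 [c1 [hc1 h1 e1]]] := face_standard hF.
  have [s2 [c2 [hc2 h2 e2]]] := face_standard hG.
  have eU : used_nodes (zero_nodes c1) = used_nodes (zero_nodes c2).
    by move: e; rewrite /face_diagram e1 e2 !lam_part_std_sum => /diagram_of_inj.
  have hFG x : wimage s1 F x <-> wimage s2 G x by rewrite -h1 -h2 !face_of_used // eU.
  exists (wact (rev s2 ++ s1)); split; first exact: wact_weyl.
  move=> x; split => [hx|[y [hy ->]]].
    have [|y [hy e']] := iffRL (hFG (wact s2 x)); first by exists x.
    by exists y; split => //; rewrite wact_cat -e' wact_revK.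
  have [|z [hz e']] := iffLR (hFG (wact s1 y)); first by exists y.
  by rewrite wact_cat e' wact_revK.
have [t ht] := weyl_wact hw.
have e : orbit_sum G = wact t (orbit_sum F).
  rewrite -orbit_sum_wimage; apply: orbit_sum_ext => x; rewrite hGF.
  by split; case=> y [hy ->]; exists y; rewrite ht.
by rewrite /face_diagram e dom_rep_wact.
Qed.

Lemma face_diagram_surj (S : {set option 'I_n}) :
  None \in S -> connected_sub (ext_adj alpha lam) S ->
  exists F, nonempty_face (weight_polytope Phi lam) F /\ face_diagram F = S.
Proof.
move=> hS /(connected_diagram hS) [hX ->]; set X := [set i | Some i \in S] in hX *.
have [c hc] := exists_dot_alpha (fun i => if i \in X then 0 else 1).
have hcdom : dominant c by move=> i; rewrite hc; case: ifP.
have hZ : zero_nodes c = X.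
  by apply/setP => i; rewrite inE hc; case: ifP => _; rewrite ?eqxx ?oner_eq0.
exists (fun x => weight_polytope Phi lam x /\
                 forall y, weight_polytope Phi lam y -> dot c y <= dot c x); split.
  split; last by exists c.
  by exists lam; apply/weight_faceE/(face_of_dominant _ hcdom); split => //; apply: Pol_lam.
rewrite /face_diagram (orbit_sum_ext (weight_faceE c)) orbit_sum_face // hZ.
by rewrite dom_rep_id ?lam_part_std_sum -?lam_part_used ?hX //; apply: std_sum_dominant.
Qed.

End RootSystem.

Theorem theoremD (R : realType) (n : nat) (Phi : seq 'rV[R]_n)
    (alpha : 'I_n -> 'rV[R]_n) (lam : 'rV[R]_n) :
  (0 < n)%N ->
  is_irred_reduced_root_system Phi ->
  is_base Phi alpha ->
  dominant_integral alpha lam ->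
  exists phi : ('rV[R]_n -> Prop) -> {set option 'I_n},
    [/\ (forall F, nonempty_face (weight_polytope Phi lam) F ->
           None \in phi F /\ connected_sub (ext_adj alpha lam) (phi F)),
        (forall F G, nonempty_face (weight_polytope Phi lam) F ->
           nonempty_face (weight_polytope Phi lam) G ->
           (phi F = phi G <-> same_W_orbit Phi F G)) &
        (forall S : {set option 'I_n}, None \in S ->
           connected_sub (ext_adj alpha lam) S ->
           exists F, nonempty_face (weight_polytope Phi lam) F /\ phi F = S)].
Proof.
move=> _ HR HB HD; exists (face_diagram HR HB lam); split.
- by move=> F _; apply: face_diagram_connected.
- exact: face_diagram_eq.
- exact: face_diagram_surj.
Qed.
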